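(* Let $G=(V,E,s)$ be a flow graph and let $D$ be its dominator tree, with $t(v)$ denoting the parent of a vertex $v\neq s$ in $D$. (i) If $G'$ is obtained from $G$ by inserting an edge, then $D$ still has the sibling property with respect to $G'$: for any two siblings $v,w$ in $D$, $v$ does not dominate $w$ in $G'$. (An insertion may, however, violate the parent property of $D$.) (ii) If $G'=(V,E',s)$ is obtained from $G$ by deleting an edge, then $D$ still has the parent property with respect to $G'$: for every edge $(v,w)\in E'$ such that $v$ is reachable from $s$ in $G'$, $v$ is a descendant of $t(w)$ in $D$. (A deletion may, however, violate the sibling property of $D$.)
   Context: A flow graph $G=(V,E,s)$ is a directed graph with a distinguished start vertex $s$. A vertex is reachable if there is a path from $s$ to it. For reachable vertices, $w$ dominates $v$ if every path from $s$ to $v$ contains $w$. The immediate dominator $d(v)$ of a reachable $v\neq s$ is the proper dominator of $v$ dominated by all other proper dominators of $v$; the dominator tree $D$ is the tree on the reachable vertices rooted at $s$ in which the parent of each $v\neq s$ is $d(v)$. For a tree $T$ rooted at $s$ on the reachable vertices with parent function $t$: $T$ has the parent property if for every edge $(v,w)$ with $v$ reachable, $v$ is a descendant of $t(w)$ in $T$; $T$ has the sibling property if for all siblings $v,w$ in $T$, $v$ does not dominate $w$. *)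

From mathcomp Require Import all_boot.
Set Implicit Arguments. Unset Strict Implicit. Unset Printing Implicit Defensive.

Section FlowGraph.
Variables (V : finType) (e : rel V) (s : V).

Definition reachable (v : V) : Prop :=
  exists p : seq V, path e s p /\ last s p = v.

(* w dominates v: every path from s to v contains w
   (meaningful for reachable v) *)
Definition dominates (w v : V) : Prop :=
  forall p : seq V, path e s p -> last s p = v -> w \in s :: p.

Definition idom (v d : V) : Prop :=
  d != v /\ dominates d v /\
  forall u, u != v -> dominates u v -> dominates u d.

(* t is the parent function of the dominator tree D of (V,e,s):
   for every reachable v <> s, t v = d(v). (t s is irrelevant.) *)
Definition is_dom_tree_parent (t : V -> V) : Prop :=
  forall v, reachable v -> v != s -> idom v (t v).
End FlowGraph.

Definition tree_descendant (V : finType) (t : V -> V) (s v u : V) : Prop :=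
  exists k : nat, iter k t v = u /\ forall j, j < k -> iter j t v != s.

Definition insert_edge (V : finType) (e : rel V) (a b : V) : rel V :=
  fun x y => e x y || ((x == a) && (y == b)).
Definition delete_edge (V : finType) (e : rel V) (a b : V) : rel V :=
  fun x y => e x y && ~~ ((x == a) && (y == b)).

(* Both parts reduce to properties of the dominator tree D of G itself, because
   dominance is antitone and reachability monotone in the edge relation.  Every
   dominator of v is an ancestor of v in D (follow immediate dominators along
   ever shorter paths), so the parent property of D in G transfers to any
   subgraph.  If a sibling v dominated w in G, it would dominate d(w) = d(v),
   and two vertices dominating each other coincide; this transfers to any
   supergraph. *)
From mathcomp Require Import all_boot.

Set Implicit Arguments.
Unset Strict Implicit.
Unset Printing Implicit Defensive.

Lemma reachable_subrel (V : finType) (e e' : rel V) (s v : V) :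
  subrel e e' -> reachable e s v -> reachable e' s v.
Proof. by move=> ee' [p [hp hl]]; exists p; split; first exact: sub_path hp. Qed.

Lemma dominates_subrel (V : finType) (e e' : rel V) (s x y : V) :
  subrel e e' -> dominates e' s x y -> dominates e s x y.
Proof. by move=> ee' hxy p hp; apply: hxy; apply: sub_path hp. Qed.

Section Dominance.
Variables (V : finType) (e : rel V) (s : V).

Lemma dominates_source (u : V) : dominates e s u s -> u = s.
Proof. by move=> hu; have := hu [::] isT erefl; rewrite inE => /eqP. Qed.

Lemma dominates_shorter_path (x y : V) (p : seq V) :
  dominates e s x y -> x != y -> path e s p -> last s p = y ->
  exists2 q, path e s q & last s q = x /\ size q < size p.
Proof.
move=> hxy nxy hp hl; have hxp := hxy p hp hl.
case/splitPl: hxp hp hl => p1 p2 hx; rewrite cat_path last_cat => /andP [hp1 _] hl.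
exists p1 => //; split=> //.
case: p2 hl => [|z p2] hl; first by rewrite -hl -hx eqxx in nxy.
by rewrite size_cat /= addnS ltnS leq_addr.
Qed.

Lemma dominates_antisym (x y : V) :
  reachable e s y -> dominates e s x y -> dominates e s y x -> x = y.
Proof.
case=> p [hp hl] hxy hyx; apply/eqP/contraT => nxy; exfalso.
elim: {p}(size p).+1 {-2}p (ltnSn (size p)) hp hl => // n IH p hpn hp hl.
have [q hq [hql hqp]] := dominates_shorter_path hxy nxy hp hl.
have nyx : y != x by rewrite eq_sym.
have [r hr [hrl hrq]] := dominates_shorter_path hyx nyx hq hql.
by apply: IH hr hrl; rewrite -ltnS (leq_trans _ hpn) // ltnS (ltn_trans hrq).
Qed.

Lemma idom_dominates_pred (v w d : V) :
  e v w -> reachable e s v -> idom e s w d -> dominates e s d v.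
Proof.
move=> hvw [p [hp hl]] [ndw [hdw _]] q hq hql.
have := hdw (rcons q w); rewrite rcons_path hq hql hvw last_rcons => /(_ isT erefl).
by rewrite -rcons_cons mem_rcons in_cons (negbTE ndw).
Qed.

Section DominatorTree.
Variable t : V -> V.
Hypothesis hD : is_dom_tree_parent e s t.

Lemma dominator_tree_ancestor (u v : V) :
  reachable e s v -> dominates e s u v -> tree_descendant t s v u.
Proof.
case=> p [hp hl]; elim: {p}(size p).+1 {-2}p (ltnSn (size p)) v hp hl => //.
move=> n IH p hpn v hp hl huv.
have [->|nuv] := eqVneq u v; first by exists 0; split.
have nvs : v != s.
  by apply: contra_neq nuv => hvs; move: huv; rewrite hvs; exact: dominates_source.
have [ntv [htv hall]] := hD (ex_intro _ p (conj hp hl)) nvs.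
have [q hq [hql hqp]] := dominates_shorter_path htv ntv hp hl.
have [k [hk hks]] := IH q (leq_trans hqp hpn) (t v) hq hql (hall u nuv huv).
exists k.+1; split; first by rewrite iterSr.
by case=> [|j] // hjk; rewrite iterSr hks.
Qed.

Lemma dom_tree_parent_property (v w : V) :
  e v w -> reachable e s v -> w != s -> tree_descendant t s v (t w).
Proof.
move=> hvw hv nws; apply: (dominator_tree_ancestor hv).
apply: (idom_dominates_pred hvw hv); apply: hD nws.
case: hv => p [hp hl]; exists (rcons p w).
by rewrite rcons_path hp hl hvw last_rcons.
Qed.

Lemma dom_tree_sibling_property (v w : V) :
  reachable e s v -> reachable e s w -> v != s -> w != s -> v != w ->
  t v = t w -> ~ dominates e s v w.
Proof.
move=> hv hw nvs nws nvw htvw hvw.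
have [_ [_ hallw]] := hD hw nws.
have [ntv [htv _]] := hD hv nvs.
have hvtv : dominates e s v (t v) by rewrite htvw; apply: hallw.
by move/eqP: ntv; apply; apply: dominates_antisym hv htv hvtv.
Qed.

End DominatorTree.
End Dominance.

Theorem proposition1 (V : finType) (e : rel V) (s : V) (t : V -> V)
    (hD : is_dom_tree_parent e s t) :
  (* (i) sibling property survives edge insertion *)
  (forall a b : V,
     forall v w : V,
       reachable e s v -> reachable e s w -> v != s -> w != s ->
       v != w -> t v = t w ->
       ~ dominates (insert_edge e a b) s v w)
  /\
  (* (ii) parent property survives edge deletion *)
  (forall a b : V, e a b ->
     forall v w : V,
       delete_edge e a b v w -> reachable (delete_edge e a b) s v ->
       w != s ->
       tree_descendant t s v (t w)).
Proof.
split.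
  move=> a b v w hv hw nvs nws nvw htvw.
  have sub_e : subrel e (insert_edge e a b) by move=> x y hxy; rewrite /insert_edge hxy.
  move/(dominates_subrel sub_e); exact: (dom_tree_sibling_property hD hv hw nvs nws nvw htvw).
move=> a b _ v w hvw hv nws.
have sub_e : subrel (delete_edge e a b) e by move=> x y /andP [].
exact: (dom_tree_parent_property hD (sub_e _ _ hvw) (reachable_subrel sub_e hv) nws).
Qed.
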